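(* Every spline $s\in\mathcal Z_{kl}^{\Delta\lambda,\Delta\mu}(\Omega)$ has a unique representation $$s(x,y)=\sum_{i=-k}^{g-1}\sum_{j=-l}^{h-1}z_{ij}\,Z_{ij}^{k+1,l+1}(x,y)+\sum_{i=-k}^{g-1}v_i\,Z_i^{k+1}(x,y)+\sum_{j=-l}^{h-1}u_j\,Z_j^{l+1}(x,y)$$ with real coefficients $z_{ij},v_i,u_j$.
   Context: Let $\Omega=[a,b]\times[c,d]\subset\mathbb R^2$ with $a<b$, $c<d$. Fix integers $g,h\ge 0$ and degrees $k,l\in\mathbb N_0$. Take knots $a=\lambda_0<\lambda_1<\dots<\lambda_g<\lambda_{g+1}=b$ and $c=\mu_0<\mu_1<\dots<\mu_h<\mu_{h+1}=d$, extended by coincident boundary knots $\lambda_{-k}=\dots=\lambda_0=a$, $\lambda_{g+1}=\dots=\lambda_{g+k+1}=b$, and $\mu_{-l}=\dots=\mu_0=c$, $\mu_{h+1}=\dots=\mu_{h+l+1}=d$. For $i=-k,\dots,g$ let $B_i^{k+1}(x)$ denote the (normalized) B-spline of degree $k$ with knots $\lambda_i,\dots,\lambda_{i+k+1}$, so that $\sum_{i=-k}^g B_i^{k+1}(x)=1$ on $[a,b]$; similarly $B_j^{l+1}(y)$, $j=-l,\dots,h$, is the B-spline of degree $l$ with knots $\mu_j,\dots,\mu_{j+l+1}$. Let $\mathcal S_{kl}^{\Delta\lambda,\Delta\mu}(\Omega)$ be the span of the functions $B_i^{k+1}(x)B_j^{l+1}(y)$, and $\mathcal Z_{kl}^{\Delta\lambda,\Delta\mu}(\Omega)=\{s\in\mathcal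 S_{kl}^{\Delta\lambda,\Delta\mu}(\Omega):\iint_\Omega s\,dx\,dy=0\}$. The univariate ZB-splines are, for $i=-k,\dots,g-1$, $$Z_i^{k+1}(x)=(k+1)\Big(\frac{B_i^{k+1}(x)}{\lambda_{i+k+1}-\lambda_i}-\frac{B_{i+1}^{k+1}(x)}{\lambda_{i+k+2}-\lambda_{i+1}}\Big),$$ and analogously $Z_j^{l+1}(y)=(l+1)\big(\frac{B_j^{l+1}(y)}{\mu_{j+l+1}-\mu_j}-\frac{B_{j+1}^{l+1}(y)}{\mu_{j+l+2}-\mu_{j+1}}\big)$ for $j=-l,\dots,h-1$. The bivariate ZB-splines are $Z_{ij}^{k+1,l+1}(x,y)=Z_i^{k+1}(x)Z_j^{l+1}(y)$, $Z_i^{k+1}(x,y)=Z_i^{k+1}(x)$ and $Z_j^{l+1}(x,y)=Z_j^{l+1}(y)$. *)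

From Stdlib Require Import Reals ZArith List.
From Coquelicot Require Import Coquelicot.
Open Scope R_scope.

(* guarded division: 0 when the denominator vanishes (the usual 0/0 := 0
   convention of the Cox--de Boor recursion) *)
Definition gdiv (num den : R) : R :=
  if Req_EM_T den 0 then 0 else num / den.

(* Normalized B-splines via Cox--de Boor on the knot sequence t : Z -> R.
   bspline t e p i x = B_i^{p+1}(x), degree p, knots t_i,...,t_{i+p+1}.
   Degree 0: indicator of [t_i, t_{i+1}), except that the (nondegenerate)
   interval ending at the right endpoint e is closed, so that the
   B-splines sum to 1 on the whole closed interval [a, e]. *)
Fixpoint bspline (t : Z -> R) (e : R) (p : nat) (i : Z) (x : R) : R :=
  match p with
  | O =>
      if Rle_dec (t i) x then
        if Rlt_dec x (t (i + 1)%Z) then 1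
        else if Req_EM_T x e then
               (if Rlt_dec (t i) (t (i + 1)%Z) then
                  (if Req_EM_T (t (i + 1)%Z) e then 1 else 0)
                else 0)
             else 0
      else 0
  | S q =>
      gdiv (x - t i) (t (i + Z.of_nat p)%Z - t i) * bspline t e q i x
      + gdiv (t (i + Z.of_nat p + 1)%Z - x) (t (i + Z.of_nat p + 1)%Z - t (i + 1)%Z)
          * bspline t e q (i + 1)%Z x
  end.

Definition zrange (m n : Z) : list Z :=
  map (fun k => (m + Z.of_nat k)%Z) (seq 0 (Z.to_nat (n - m + 1))).
Definition zsum (m n : Z) (f : Z -> R) : R :=
  fold_right Rplus 0 (map f (zrange m n)).

Definition knot_seq (lam : Z -> R) (a b : R) (g k : nat) : Prop :=
  (forall i : Z, (- Z.of_nat k <= i <= 0)%Z -> lam i = a) /\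
  (forall i : Z, (Z.of_nat g + 1 <= i <= Z.of_nat g + Z.of_nat k + 1)%Z -> lam i = b) /\
  (forall i : Z, (0 <= i <= Z.of_nat g)%Z -> lam i < lam (i + 1)%Z).

Definition zbspline (t : Z -> R) (e : R) (k : nat) (i : Z) (x : R) : R :=
  INR (k + 1) *
  ( bspline t e k i x / (t (i + Z.of_nat k + 1)%Z - t i)
  - bspline t e k (i + 1)%Z x / (t (i + Z.of_nat k + 2)%Z - t (i + 1)%Z)).

Definition in_spline_space (lam mu : Z -> R) (a b c d : R) (g h k l : nat)
    (s : R -> R -> R) : Prop :=
  exists coef : Z -> Z -> R,
    forall x y, a <= x <= b -> c <= y <= d ->
      s x y = zsum (- Z.of_nat k) (Z.of_nat g) (fun i =>
                zsum (- Z.of_nat l) (Z.of_nat h) (fun j =>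
                  coef i j * bspline lam b k i x * bspline mu d l j y)).

Definition dint (a b c d : R) (s : R -> R -> R) : R :=
  RInt (fun x => RInt (fun y => s x y) c d) a b.

Definition in_zero_spline_space (lam mu : Z -> R) (a b c d : R) (g h k l : nat)
    (s : R -> R -> R) : Prop :=
  in_spline_space lam mu a b c d g h k l s /\ dint a b c d s = 0.

Definition zb_expansion (lam mu : Z -> R) (b d : R) (g h k l : nat)
    (z : Z -> Z -> R) (v u : Z -> R) (x y : R) : R :=
  zsum (- Z.of_nat k) (Z.of_nat g - 1) (fun i =>
    zsum (- Z.of_nat l) (Z.of_nat h - 1) (fun j =>
      z i j * (zbspline lam b k i x * zbspline mu d l j y)))
  + zsum (- Z.of_nat k) (Z.of_nat g - 1) (fun i => v i * zbspline lam b k i x)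
  + zsum (- Z.of_nat l) (Z.of_nat h - 1) (fun j => u j * zbspline mu d l j y).

(* The ZB-splines Z_i = M_i - M_(i+1) are differences of B-splines M_i
   normalized to unit integral, so each Z_i has integral zero. Together with
   the constants they span the univariate spline space: M_i - M_g telescopes
   into Z_i + ... + Z_(g-1), and M_g is recovered from the partition of unity
   1 = sum_i c_i M_i, whose weights c_i are positive. Linear independence of
   1 and the Z_i reduces, by summation by parts, to linear independence of
   the B-splines, which follows by induction on the degree: on each knot
   interval the derivative of a combination of degree p+1 is a combination of
   degree p with differenced coefficients.
   Taking tensor products, every bivariate spline is a constant plus a
   ZB-expansion. Integration over the rectangle kills the ZB-expansion, so
   zero mean forces the constant to vanish; uniqueness follows by applying
   univariate uniqueness first in x and then in y. *)

From Stdlib Require Import Reals ZArith List Lra Lia FunctionalExtensionality.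
From Coquelicot Require Import Coquelicot.
Open Scope R_scope.

Lemma Z_ind_from (m : Z) (P : Z -> Prop) :
  (forall n, (n < m)%Z -> P n) ->
  (forall n, (m <= n)%Z -> P (n - 1)%Z -> P n) ->
  forall n, P n.
Proof.
  intros Hlt Hstep n. destruct (Z_lt_le_dec n m) as [Hn|Hn]; [now apply Hlt|].
  replace n with (m + Z.of_nat (Z.to_nat (n - m)))%Z by lia.
  induction (Z.to_nat (n - m)) as [|N IH].
  - apply Hstep; [lia|]. apply Hlt. lia.
  - apply Hstep; [lia|]. now replace (m + Z.of_nat (S N) - 1)%Z with (m + Z.of_nat N)%Z by lia.
Qed.

Lemma zsum_empty m n f : (n < m)%Z -> zsum m n f = 0.
Proof. intro H. unfold zsum, zrange. now replace (Z.to_nat (n - m + 1)) with O by lia. Qed.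

Lemma zsum_last m n f : (m <= n)%Z -> zsum m n f = zsum m (n - 1) f + f n.
Proof.
  intro H. unfold zsum, zrange.
  replace (Z.to_nat (n - m + 1)) with (S (Z.to_nat (n - 1 - m + 1))) by lia.
  rewrite seq_S, !map_app, fold_right_app. simpl.
  replace (m + Z.of_nat (Z.to_nat (n - 1 - m + 1)))%Z with n by lia.
  induction (map _ _) as [|x s IH]; simpl; lra.
Qed.

Lemma zsum_ext m n f f' :
  (forall i, (m <= i <= n)%Z -> f i = f' i) -> zsum m n f = zsum m n f'.
Proof.
  intro H. unfold zsum, zrange. rewrite !map_map. f_equal. apply map_ext_in.
  intros j Hj. apply in_seq in Hj. apply H. lia.
Qed.

Lemma zsum_first m n f : (m <= n)%Z -> zsum m n f = f m + zsum (m + 1) n f.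
Proof.
  induction n as [n Hn|n Hn IH] using (Z_ind_from m); [intros; lia|]. intros _.
  rewrite zsum_last by lia.
  destruct (Z.eq_dec n m) as [->|Hnm].
  - rewrite !zsum_empty by lia. lra.
  - rewrite IH, (zsum_last (m + 1) n) by lia. lra.
Qed.

Lemma zsum_closed {A} (P : (A -> R) -> R -> Prop) (F : Z -> A -> R) (w : Z -> R) m n :
  P (fun _ => 0) 0 ->
  (forall f f' r r', P f r -> P f' r' -> P (fun x => f x + f' x) (r + r')) ->
  (forall i, (m <= i <= n)%Z -> P (F i) (w i)) ->
  P (fun x => zsum m n (fun i => F i x)) (zsum m n w).
Proof.
  intros H0 Hplus. induction n as [n Hn|n Hn IH] using (Z_ind_from m); intro HF.
  - rewrite (zsum_empty m n w) by lia.
    replace (fun x => zsum m n (fun i => F i x)) with (fun _ : A => 0); [exact H0|].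
    apply functional_extensionality. intro. now rewrite zsum_empty by lia.
  - rewrite zsum_last by lia.
    replace (fun x => zsum m n (fun i => F i x))
      with (fun x => zsum m (n - 1) (fun i => F i x) + F n x).
    + apply Hplus; [apply IH|]; intros; apply HF; lia.
    + apply functional_extensionality. intro. now rewrite (zsum_last m n) by lia.
Qed.

Lemma zsum_plus m n f f' : zsum m n (fun i => f i + f' i) = zsum m n f + zsum m n f'.
Proof.
  induction n as [n Hn|n Hn IH] using (Z_ind_from m).
  - rewrite !zsum_empty by lia. lra.
  - rewrite !(zsum_last m n) by lia. rewrite IH. lra.
Qed.

Lemma zsum_mult_l m n c f : c * zsum m n f = zsum m n (fun i => c * f i).
Proof.
  induction n as [n Hn|n Hn IH] using (Z_ind_from m).
  - rewrite !zsum_empty by lia. lra.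
  - rewrite !(zsum_last m n) by lia. rewrite <- IH. lra.
Qed.

Lemma zsum_zero m n : zsum m n (fun _ => 0) = 0.
Proof.
  induction n as [n Hn|n Hn IH] using (Z_ind_from m).
  - now rewrite zsum_empty.
  - rewrite zsum_last, IH by lia. lra.
Qed.

Lemma zsum_shift m n f : zsum (m + 1) (n + 1) f = zsum m n (fun i => f (i + 1)%Z).
Proof.
  unfold zsum, zrange. rewrite !map_map.
  replace (n + 1 - (m + 1) + 1)%Z with (n - m + 1)%Z by lia.
  f_equal. apply map_ext. intro j. f_equal. lia.
Qed.

Lemma zsum_kronecker m n (c : Z -> R) p : (m <= p <= n)%Z ->
  zsum m n (fun i => c i * (if Z.eq_dec i p then 1 else 0)) = c p.
Proof.
  intros [Hmp Hpn].
  assert (Hbelow : forall n', (n' < p)%Z ->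
            zsum m n' (fun i => c i * (if Z.eq_dec i p then 1 else 0)) = 0).
  { intros n' Hn'. transitivity (zsum m n' (fun _ => 0)); [|apply zsum_zero]. apply zsum_ext. intros i Hi.
    destruct (Z.eq_dec i p); [lia|ring]. }
  induction n as [n Hn|n Hn IH] using (Z_ind_from p); [lia|].
  rewrite zsum_last by lia. destruct (Z.eq_dec n p) as [->|Hnp].
  - rewrite Hbelow by lia. ring.
  - rewrite IH by lia. ring.
Qed.

Lemma zsum_pos m n f : (m <= n)%Z -> (forall i, (m <= i <= n)%Z -> 0 < f i) -> 0 < zsum m n f.
Proof.
  induction n as [n Hn|n Hn IH] using (Z_ind_from m); [intros; lia|]. intros _ Hf.
  rewrite zsum_last by lia. assert (Hfn := Hf n ltac:(lia)).
  destruct (Z.eq_dec n m) as [->|Hnm].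
  - rewrite zsum_empty by lia. lra.
  - specialize (IH ltac:(lia) (fun i Hi => Hf i ltac:(lia))). lra.
Qed.

Lemma zsum_telescope m n f : (m - 1 <= n)%Z ->
  zsum m n (fun i => f i - f (i - 1)%Z) = f n - f (m - 1)%Z.
Proof.
  induction n as [n Hn|n Hn IH] using (Z_ind_from m).
  - intro. replace n with (m - 1)%Z by lia. rewrite zsum_empty by lia. lra.
  - intros _. rewrite zsum_last, IH by lia. lra.
Qed.

Lemma zsum_by_parts m n (c phi : Z -> R) : (m <= n)%Z ->
  zsum m n (fun i => c i * (phi i - phi (i + 1)%Z)) =
  zsum (m + 1) n (fun i => (c i - c (i - 1)%Z) * phi i) + c m * phi m - c n * phi (n + 1)%Z.
Proof.
  induction n as [n Hn|n Hn IH] using (Z_ind_from m); [intros; lia|]. intros _.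
  rewrite zsum_last by lia. destruct (Z.eq_dec n m) as [->|Hnm].
  - rewrite !zsum_empty by lia. ring.
  - rewrite IH, (zsum_last (m + 1) n) by lia. replace (n - 1 + 1)%Z with n by lia. ring.
Qed.

Lemma const_of_eq_pred (c : Z -> R) lo hi :
  (forall i, (lo < i <= hi)%Z -> c i = c (i - 1)%Z) -> forall i, (lo <= i <= hi)%Z -> c i = c lo.
Proof.
  intros Hstep i. induction i as [i Hi|i Hi IH] using (Z_ind_from (lo + 1)).
  - intro. now replace i with lo by lia.
  - intro. rewrite Hstep, IH by lia. reflexivity.
Qed.

Lemma gdiv_0_l D : gdiv 0 D = 0.
Proof. unfold gdiv. destruct (Req_EM_T D 0); [reflexivity|field; auto]. Qed.

Lemma gdiv_0_r n : gdiv n 0 = 0.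
Proof. unfold gdiv. now destruct (Req_EM_T 0 0). Qed.

Lemma gdiv_eq_mult c D : gdiv c D = c * gdiv 1 D.
Proof. unfold gdiv. destruct (Req_EM_T D 0); field_simplify; auto; lra. Qed.

Lemma is_RInt_eq (f : R -> R) (x y l l' : R) : is_RInt f x y l -> l = l' -> is_RInt f x y l'.
Proof. now intros H <-. Qed.

Lemma is_derive_eq (f : R -> R) (x l l' : R) : is_derive f x l -> l = l' -> is_derive f x l'.
Proof. now intros H <-. Qed.

Lemma is_derive_gdiv_sub_r u D x : is_derive (fun y => gdiv (y - u) D) x (gdiv 1 D).
Proof.
  unfold gdiv. destruct (Req_EM_T D 0).
  - apply (is_derive_const 0 x).
  - auto_derive; [exact I|field; assumption].
Qed.

Lemma is_derive_gdiv_sub_l u D x : is_derive (fun y => gdiv (u - y) D) x (- gdiv 1 D).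
Proof.
  unfold gdiv. destruct (Req_EM_T D 0).
  - replace (- 0) with 0 by ring. apply (is_derive_const 0 x).
  - auto_derive; [exact I|field; assumption].
Qed.

Lemma is_derive_cox_de_boor (f h : R -> R) x df dh u D U D' :
  is_derive f x df -> is_derive h x dh ->
  is_derive (fun y => gdiv (y - u) D * f y + gdiv (U - y) D' * h y) x
    (gdiv 1 D * f x + gdiv (x - u) D * df + (- gdiv 1 D' * h x + gdiv (U - x) D' * dh)).
Proof.
  intros Hf Hh.
  apply (is_derive_plus (fun y => gdiv (y - u) D * f y) (fun y => gdiv (U - y) D' * h y)).
  - apply (is_derive_mult (fun y => gdiv (y - u) D) f); [apply is_derive_gdiv_sub_r|exact Hf|].
    intros; apply Rmult_comm.
  - apply (is_derive_mult (fun y => gdiv (U - y) D') h); [apply is_derive_gdiv_sub_l|exact Hh|].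
    intros; apply Rmult_comm.
Qed.

(* The induction step of the derivative formula
   [(B_i^(n+1))' = (n + 1) (B_i^n / (..) - B_(i+1)^n / (..))] (superscripts are
   degrees): [b0], [b1], [b2] are the B-splines of degree [n - 1] involved. *)
Lemma cox_de_boor_derivative_identity (u0 u1 u2 v w z x b0 b1 b2 n : R) :
 u0 <= u1 -> u1 <= v -> v <= w -> w <= z -> u1 <= u2 -> u2 <= w ->
 gdiv 1 (w - u0) * (gdiv (x - u0) (v - u0) * b0 + gdiv (w - x) (w - u1) * b1)
 + gdiv (x - u0) (w - u0) * (n * (gdiv b0 (v - u0) - gdiv b1 (w - u1)))
 + (- gdiv 1 (z - u1) * (gdiv (x - u1) (w - u1) * b1 + gdiv (z - x) (z - u2) * b2)
    + gdiv (z - x) (z - u1) * (n * (gdiv b1 (w - u1) - gdiv b2 (z - u2))))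
 = (n + 1) * (gdiv (gdiv (x - u0) (v - u0) * b0 + gdiv (w - x) (w - u1) * b1) (w - u0)
              - gdiv (gdiv (x - u1) (w - u1) * b1 + gdiv (z - x) (z - u2) * b2) (z - u1)).
Proof.
  intros. unfold gdiv.
  repeat match goal with |- context [Req_EM_T ?a 0] => destruct (Req_EM_T a 0) end.
  all: try (exfalso; match goal with H : ?a <> 0 |- _ => apply H; lra end).
  all: field; repeat split; assumption.
Qed.

Lemma is_derive_locally_zero (f : R -> R) (lo hi x0 l : R) : lo < x0 < hi ->
  (forall y, lo < y < hi -> f y = 0) -> is_derive f x0 l -> l = 0.
Proof.
  intros Hx Hf Hd.
  assert (Hloc : locally x0 (fun y => f y = 0)).
  { assert (Hp : 0 < Rmin (x0 - lo) (hi - x0)) by (apply Rmin_pos; lra).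
    exists (mkposreal _ Hp). intros y Hy. apply Hf.
    change (Rabs (y - x0) < Rmin (x0 - lo) (hi - x0)) in Hy. apply Rabs_def2 in Hy.
    pose proof (Rmin_l (x0 - lo) (hi - x0)). pose proof (Rmin_r (x0 - lo) (hi - x0)). lra. }
  apply is_derive_unique in Hd.
  rewrite <- Hd. apply is_derive_unique.
  apply (is_derive_ext_loc (fun _ => 0)); [|apply (is_derive_const 0 x0)].
  eapply filter_imp; [|exact Hloc]. intros y Hy. now rewrite Hy.
Qed.

Lemma continuous_gdiv_sub (f h : R -> R) (x c D D' : R) : continuous f x -> continuous h x ->
  continuous (fun y => c * (gdiv (f y) D - gdiv (h y) D')) x.
Proof.
  intros Hf Hh.
  apply (continuous_ext (fun y => c * (f y * gdiv 1 D - h y * gdiv 1 D'))).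
  { intro y. now rewrite (gdiv_eq_mult (f y)), (gdiv_eq_mult (h y)). }
  apply (continuous_mult (fun _ => c)); [apply continuous_const|].
  apply (continuous_minus (fun y => f y * gdiv 1 D) (fun y => h y * gdiv 1 D')).
  - apply (continuous_mult f (fun _ => gdiv 1 D)); [exact Hf|apply continuous_const].
  - apply (continuous_mult h (fun _ => gdiv 1 D')); [exact Hh|apply continuous_const].
Qed.

Lemma bspline_S t e p i x : bspline t e (S p) i x =
  gdiv (x - t i) (t (i + Z.of_nat (S p))%Z - t i) * bspline t e p i x
  + gdiv (t (i + Z.of_nat (S p) + 1)%Z - x) (t (i + Z.of_nat (S p) + 1)%Z - t (i + 1)%Z)
      * bspline t e p (i + 1)%Z x.
Proof. reflexivity. Qed.

Section ClampedKnots.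

Variables (t : Z -> R) (a e : R) (g : nat).
Notation G := (Z.of_nat g).
Hypothesis t_mono : forall i j, (i <= j)%Z -> t i <= t j.
Hypothesis t_left : forall j, (j <= 0)%Z -> t j = a.
Hypothesis t_right : forall j, (G + 1 <= j)%Z -> t j = e.
Hypothesis t_strict : forall j, (0 <= j <= G)%Z -> t j < t (j + 1)%Z.

Lemma knot_lt i j : (i < j)%Z -> (1 <= j)%Z -> (i <= G)%Z -> t i < t j.
Proof.
  intros Hij Hj Hi. set (i' := Z.max i 0).
  apply Rle_lt_trans with (t i'); [apply t_mono; lia|].
  apply Rlt_le_trans with (t (i' + 1)%Z); [apply t_strict; lia|apply t_mono; lia].
Qed.

(* [bpiece m p i] runs the Cox-de Boor recursion from the degree-0 data
   "indicator of the knot interval [t m, t (m+1))": it is the polynomial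
   that agrees with [bspline t e p i] on that interval. *)
Fixpoint bpiece (m : Z) (p : nat) (i : Z) (x : R) : R :=
  match p with
  | O => if Z.eq_dec i m then 1 else 0
  | S q => gdiv (x - t i) (t (i + Z.of_nat p)%Z - t i) * bpiece m q i x
      + gdiv (t (i + Z.of_nat p + 1)%Z - x) (t (i + Z.of_nat p + 1)%Z - t (i + 1)%Z)
          * bpiece m q (i + 1)%Z x
  end.

Lemma bpiece_S m q i x : bpiece m (S q) i x =
  gdiv (x - t i) (t (i + Z.of_nat (S q))%Z - t i) * bpiece m q i x
  + gdiv (t (i + Z.of_nat (S q) + 1)%Z - x) (t (i + Z.of_nat (S q) + 1)%Z - t (i + 1)%Z)
      * bpiece m q (i + 1)%Z x.
Proof. reflexivity. Qed.

Lemma bspline_eq_bpiece m x :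
  (forall j, bspline t e 0 j x = if Z.eq_dec j m then 1 else 0) ->
  forall p j, bspline t e p j x = bpiece m p j x.
Proof.
  intros H0 p. induction p as [|p IH]; intro j; [apply H0|].
  rewrite bspline_S, bpiece_S, !IH. reflexivity.
Qed.

Ltac destruct_ifs := repeat match goal with |- context [if ?c then _ else _] => destruct c end.

Lemma bspline0_interval m x : (0 <= m <= G)%Z -> t m <= x < t (m + 1)%Z ->
  forall j, bspline t e 0 j x = if Z.eq_dec j m then 1 else 0.
Proof.
  intros Hm Hx j. simpl.
  assert (t (m + 1)%Z <= e) by (rewrite <- (t_right (G + 1)) by lia; apply t_mono; lia).
  destruct (Z.eq_dec j m) as [->|Hjm]; [destruct_ifs; lra|].
  destruct (Z_lt_le_dec j m).
  - assert (t (j + 1)%Z <= t m) by (apply t_mono; lia). destruct_ifs; lra.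
  - assert (t (m + 1)%Z <= t j) by (apply t_mono; lia). destruct_ifs; lra.
Qed.

Lemma bspline0_right_end j : bspline t e 0 j e = if Z.eq_dec j G then 1 else 0.
Proof.
  simpl. assert (t G < t (G + 1)%Z) by (apply t_strict; lia).
  assert (t (G + 1)%Z = e) by (apply t_right; lia).
  destruct (Z.eq_dec j G) as [->|HjG]; [destruct_ifs; lra|].
  destruct (Z_lt_le_dec j G).
  - assert (t (j + 1)%Z <= t G) by (apply t_mono; lia). destruct_ifs; lra.
  - assert (t j = e) by (apply t_right; lia). assert (t (j + 1)%Z = e) by (apply t_right; lia).
    destruct_ifs; lra.
Qed.

Lemma knot_interval_exists x : a <= x < e -> exists m, (0 <= m <= G)%Z /\ t m <= x < t (m + 1)%Z.
Proof.
  intro Hx.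
  assert (H : forall n : nat, (n <= g)%nat -> x < t (Z.of_nat n + 1)%Z ->
            exists m, (0 <= m <= G)%Z /\ t m <= x < t (m + 1)%Z).
  { induction n as [|n IH]; intros Hn Hxn.
    - exists 0%Z. rewrite (t_left 0) by lia. split; [lia|]. split; [lra|exact Hxn].
    - destruct (Rlt_le_dec x (t (Z.of_nat n + 1)%Z)); [apply IH; [lia|assumption]|].
      exists (Z.of_nat (S n)). replace (Z.of_nat (S n)) with (Z.of_nat n + 1)%Z by lia.
      split; [lia|]. split; [assumption|].
      now replace (Z.of_nat n + 1 + 1)%Z with (Z.of_nat (S n) + 1)%Z by lia. }
  apply (H g); [lia|]. rewrite t_right by lia. lra.
Qed.

Lemma bspline_eq_bpiece_interval m x : (0 <= m <= G)%Z -> t m <= x < t (m + 1)%Z ->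
  forall p j, bspline t e p j x = bpiece m p j x.
Proof. intros. apply bspline_eq_bpiece, bspline0_interval; assumption. Qed.

Lemma bspline_eq_bpiece_domain x : a <= x <= e ->
  exists m, (0 <= m <= G)%Z /\ forall p j, bspline t e p j x = bpiece m p j x.
Proof.
  intro Hx. destruct (Req_dec x e) as [->|Hne].
  - exists G. split; [lia|]. apply bspline_eq_bpiece, bspline0_right_end.
  - destruct (knot_interval_exists x) as [m [Hm Hxm]]; [lra|].
    exists m. split; [assumption|]. now apply bspline_eq_bpiece_interval.
Qed.

Lemma bpiece_degenerate m p i x : (0 <= m <= G)%Z -> t i = t (i + Z.of_nat p + 1)%Z ->
  bpiece m p i x = 0.
Proof.
  intro Hm. revert i. induction p as [|p IH]; intros i Hi.
  - simpl. destruct (Z.eq_dec i m) as [->|]; [|reflexivity].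
    specialize (t_strict m Hm). replace (m + Z.of_nat 0 + 1)%Z with (m + 1)%Z in Hi by lia. lra.
  - rewrite bpiece_S.
    assert (t i <= t (i + Z.of_nat p + 1)%Z) by (apply t_mono; lia).
    assert (t (i + Z.of_nat p + 1)%Z <= t (i + Z.of_nat (S p) + 1)%Z) by (apply t_mono; lia).
    assert (t i <= t (i + 1)%Z) by (apply t_mono; lia).
    assert (t (i + 1)%Z <= t (i + 1 + Z.of_nat p + 1)%Z) by (apply t_mono; lia).
    replace (i + 1 + Z.of_nat p + 1)%Z with (i + Z.of_nat (S p) + 1)%Z in * by lia.
    rewrite (IH i) by lra.
    rewrite (IH (i + 1)%Z); [ring|].
    replace (i + 1 + Z.of_nat p + 1)%Z with (i + Z.of_nat (S p) + 1)%Z by lia. lra.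
Qed.

Lemma is_derive_bpiece_0 m i x : is_derive (fun y => bpiece m 0 i y) x 0.
Proof. exact (is_derive_const (if Z.eq_dec i m then 1 else 0) x). Qed.

Lemma is_derive_bpiece m p i x : (0 <= m <= G)%Z ->
  is_derive (fun y => bpiece m (S p) i y) x
   (INR (S p) * (gdiv (bpiece m p i x) (t (i + Z.of_nat (S p))%Z - t i)
                 - gdiv (bpiece m p (i + 1)%Z x) (t (i + Z.of_nat (S p) + 1)%Z - t (i + 1)%Z))).
Proof.
  intro Hm. revert i. induction p as [|p IH]; intro i.
  - eapply is_derive_eq.
    + eapply is_derive_ext; [|apply (is_derive_cox_de_boor (fun y => bpiece m 0 i y)
        (fun y => bpiece m 0 (i + 1)%Z y) x 0 0); apply is_derive_bpiece_0].
      intro; reflexivity.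
    + rewrite (gdiv_eq_mult (bpiece m 0 i x)), (gdiv_eq_mult (bpiece m 0 (i + 1)%Z x)).
      simpl INR. ring.
  - eapply is_derive_eq.
    + eapply is_derive_ext; [|eapply (is_derive_cox_de_boor _ _ x _ _ _ _ _ _ (IH i) (IH (i + 1)%Z))].
      intro; reflexivity.
    + rewrite !(bpiece_S m p).
      replace (i + 1 + Z.of_nat (S p))%Z with (i + Z.of_nat (S p) + 1)%Z by lia.
      replace (i + Z.of_nat (S (S p)))%Z with (i + Z.of_nat (S p) + 1)%Z by lia.
      replace (i + 1 + Z.of_nat (S p) + 1)%Z with (i + Z.of_nat (S (S p)) + 1)%Z by lia.
      replace (INR (S (S p))) with (INR (S p) + 1) by (rewrite (S_INR (S p)); ring).
      apply cox_de_boor_derivative_identity; apply t_mono; lia.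
Qed.

Lemma continuous_bpiece m p i x : (0 <= m <= G)%Z -> continuous (fun y => bpiece m p i y) x.
Proof.
  intro Hm. destruct p as [|p]; [apply continuous_const|].
  apply (ex_derive_continuous (K := R_AbsRing) (V := R_NormedModule)).
  eexists. now apply is_derive_bpiece.
Qed.

Lemma bpiece_sum_S m p x : (0 <= m <= G)%Z ->
  zsum (- Z.of_nat (S p)) G (fun i => bpiece m (S p) i x)
  = zsum (- Z.of_nat p) G (fun i => bpiece m p i x).
Proof.
  intro Hm.
  set (left := fun j => gdiv (x - t j) (t (j + Z.of_nat (S p))%Z - t j) * bpiece m p j x).
  set (right := fun j =>
    gdiv (t (j + Z.of_nat (S p))%Z - x) (t (j + Z.of_nat (S p))%Z - t j) * bpiece m p j x).
  transitivity (zsum (- Z.of_nat (S p)) G left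
                + zsum (- Z.of_nat (S p)) G (fun j => right (j + 1)%Z)).
  { rewrite <- zsum_plus. apply zsum_ext. intros j Hj. rewrite bpiece_S. unfold left, right.
    now replace (j + 1 + Z.of_nat (S p))%Z with (j + Z.of_nat (S p) + 1)%Z by lia. }
  rewrite <- zsum_shift. replace (- Z.of_nat (S p) + 1)%Z with (- Z.of_nat p)%Z by lia.
  rewrite zsum_first by lia. replace (- Z.of_nat (S p) + 1)%Z with (- Z.of_nat p)%Z by lia.
  rewrite (zsum_last _ (G + 1)) by lia. replace (G + 1 - 1)%Z with G by lia.
  assert (Hl : left (- Z.of_nat (S p))%Z = 0).
  { unfold left. rewrite bpiece_degenerate by (try rewrite !t_left by lia; auto). ring. }
  assert (Hr : right (G + 1)%Z = 0).
  { unfold right. rewrite bpiece_degenerate by (try rewrite !t_right by lia; auto). ring. }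
  rewrite Hl, Hr, Rplus_0_l, Rplus_0_r, <- zsum_plus.
  apply zsum_ext. intros j Hj. unfold left, right, gdiv.
  destruct (Req_EM_T (t (j + Z.of_nat (S p))%Z - t j) 0) as [E|E]; [|field; exact E].
  rewrite bpiece_degenerate; [ring|assumption|].
  replace (j + Z.of_nat p + 1)%Z with (j + Z.of_nat (S p))%Z by lia. lra.
Qed.

Lemma bpiece_sum m p x : (0 <= m <= G)%Z -> zsum (- Z.of_nat p) G (fun i => bpiece m p i x) = 1.
Proof.
  intro Hm. induction p as [|p IH].
  - rewrite <- (zsum_kronecker 0 G (fun _ => 1) m) by lia.
    apply zsum_ext. intros. simpl. ring.
  - now rewrite bpiece_sum_S.
Qed.

Lemma bspline_sum p x : a <= x <= e -> zsum (- Z.of_nat p) G (fun i => bspline t e p i x) = 1.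
Proof.
  intro Hx. destruct (bspline_eq_bpiece_domain x Hx) as [m [Hm H]].
  rewrite <- (bpiece_sum m p x Hm). apply zsum_ext. intros. apply H.
Qed.

(* In degree 1 the pieces are hat functions, continuous at the knot; the
   recursion propagates this since its coefficients do not depend on [m]. *)
Lemma bpiece_agree_at_knot m q j : (0 <= m)%Z -> (m + 1 <= G)%Z ->
  bpiece m (S q) j (t (m + 1)%Z) = bpiece (m + 1)%Z (S q) j (t (m + 1)%Z).
Proof.
  intros Hm Hm1. induction q as [|q IH] in j |- *.
  - rewrite !bpiece_S. simpl bpiece. change (Z.of_nat 1) with 1%Z.
    assert (t m < t (m + 1)%Z) by (apply t_strict; lia).
    assert (t (m + 1)%Z < t (m + 1 + 1)%Z) by (apply t_strict; lia).
    destruct_ifs; try lia; try subst m; try subst j; unfold gdiv; destruct_ifs;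
      first [ring | lra | field; lra].
  - rewrite !(bpiece_S _ (S q)), !IH. reflexivity.
Qed.

Lemma bpiece_left_end p i : (1 <= i + Z.of_nat p)%Z -> bpiece 0 p i a = 0.
Proof.
  induction p as [|p IH] in i |- *; intro Hi.
  - simpl. destruct (Z.eq_dec i 0); [lia|reflexivity].
  - rewrite bpiece_S, (IH (i + 1)%Z) by lia.
    destruct (Z_le_gt_dec i 0).
    + rewrite (t_left i), Rminus_diag, gdiv_0_l by lia. ring.
    + rewrite IH by lia. ring.
Qed.

Lemma bpiece_right_end p i : (i <= G - 1)%Z -> bpiece G p i e = 0.
Proof.
  induction p as [|p IH] in i |- *; intro Hi.
  - simpl. destruct (Z.eq_dec i G); [lia|reflexivity].
  - rewrite bpiece_S, (IH i) by lia.
    destruct (Z_le_gt_dec (i + 1) (G - 1)).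
    + rewrite IH by lia. ring.
    + rewrite (t_right (i + Z.of_nat (S p) + 1)), Rminus_diag, gdiv_0_l by lia. ring.
Qed.

(* On a knot interval, [zbspline t e k i] is the derivative of the polynomial
   piece of the B-spline of degree [k + 1]. *)
Lemma is_RInt_zbspline_interval k i m :
  (- Z.of_nat k <= i <= G - 1)%Z -> (0 <= m <= G)%Z ->
  is_RInt (fun x => zbspline t e k i x) (t m) (t (m + 1)%Z)
    (bpiece m (S k) i (t (m + 1)%Z) - bpiece m (S k) i (t m)).
Proof.
  intros Hi Hm. assert (t m < t (m + 1)%Z) by (apply t_strict; lia).
  assert (t i < t (i + Z.of_nat (S k))%Z) by (apply knot_lt; lia).
  assert (t (i + 1)%Z < t (i + Z.of_nat (S k) + 1)%Z) by (apply knot_lt; lia).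
  set (df := fun y => INR (S k) * (gdiv (bpiece m k i y) (t (i + Z.of_nat (S k))%Z - t i)
               - gdiv (bpiece m k (i + 1)%Z y) (t (i + Z.of_nat (S k) + 1)%Z - t (i + 1)%Z))).
  apply (is_RInt_ext df).
  { intros x Hx. rewrite Rmin_left, Rmax_right in Hx by lra. unfold df, zbspline.
    rewrite !(bspline_eq_bpiece_interval m x) by (auto; lra).
    replace (i + Z.of_nat k + 1)%Z with (i + Z.of_nat (S k))%Z by lia.
    replace (i + Z.of_nat k + 2)%Z with (i + Z.of_nat (S k) + 1)%Z by lia.
    replace (k + 1)%nat with (S k) by lia.
    unfold gdiv. do 2 (destruct Req_EM_T; [lra|]). reflexivity. }
  eapply is_RInt_eq.
  - apply (is_RInt_derive (fun y => bpiece m (S k) i y) df).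
    + intros x _. now apply is_derive_bpiece.
    + intros x _. apply continuous_gdiv_sub; now apply continuous_bpiece.
  - reflexivity.
Qed.

Lemma is_RInt_zbspline k i : (- Z.of_nat k <= i <= G - 1)%Z ->
  is_RInt (fun x => zbspline t e k i x) a e 0.
Proof.
  intro Hi.
  assert (Hpartial : forall n : nat, (n <= g)%nat ->
    is_RInt (fun x => zbspline t e k i x) (t 0%Z) (t (Z.of_nat n + 1)%Z)
      (bpiece (Z.of_nat n) (S k) i (t (Z.of_nat n + 1)%Z) - bpiece 0 (S k) i (t 0%Z))).
  { induction n as [|n IH]; intro Hn; [apply is_RInt_zbspline_interval; lia|].
    eapply is_RInt_eq.
    - apply (is_RInt_Chasles _ _ (t (Z.of_nat n + 1)%Z)); [apply IH; lia|].
      replace (Z.of_nat (S n) + 1)%Z with (Z.of_nat n + 1 + 1)%Z by lia.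
      apply is_RInt_zbspline_interval; lia.
    - change (plus ?u ?v) with (u + v).
      rewrite (bpiece_agree_at_knot (Z.of_nat n)) by lia.
      replace (Z.of_nat (S n)) with (Z.of_nat n + 1)%Z by lia. ring. }
  specialize (Hpartial g (le_n g)).
  rewrite (t_right (G + 1)), (t_left 0), bpiece_right_end, bpiece_left_end in Hpartial by lia.
  eapply is_RInt_eq; [exact Hpartial|ring].
Qed.

Lemma bpiece_combination_derivative p (c : Z -> R) m x0 :
  (0 <= m <= G)%Z -> t m < x0 < t (m + 1)%Z ->
  (forall x, t m < x < t (m + 1)%Z ->
     zsum (- Z.of_nat (S p)) G (fun i => c i * bpiece m (S p) i x) = 0) ->
  zsum (- Z.of_nat p) G
    (fun i => (c i - c (i - 1)%Z) / (t (i + Z.of_nat (S p))%Z - t i) * bpiece m p i x0) = 0.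
Proof.
  intros Hm Hx0 Hc.
  set (phi := fun j => gdiv (bpiece m p j x0) (t (j + Z.of_nat (S p))%Z - t j)).
  assert (Hder : is_derive (fun y => zsum (- Z.of_nat (S p)) G (fun i => c i * bpiece m (S p) i y))
            x0 (zsum (- Z.of_nat (S p)) G (fun i => c i * (INR (S p) * (phi i - phi (i + 1)%Z))))).
  { apply (zsum_closed (fun f r => is_derive f x0 r)).
    - apply (is_derive_const 0 x0).
    - intros f f' r r' Hf Hf'. exact (is_derive_plus f f' x0 r r' Hf Hf').
    - intros i Hi. apply is_derive_scal. eapply is_derive_eq; [now apply is_derive_bpiece|].
      unfold phi. now replace (i + 1 + Z.of_nat (S p))%Z with (i + Z.of_nat (S p) + 1)%Z by lia. }
  apply (is_derive_locally_zero _ _ _ _ _ Hx0 Hc) in Hder.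
  assert (Hleft : phi (- Z.of_nat (S p))%Z = 0).
  { unfold phi. rewrite !t_left by lia. rewrite Rminus_diag. apply gdiv_0_r. }
  assert (Hright : phi (G + 1)%Z = 0).
  { unfold phi. rewrite !t_right by lia. rewrite Rminus_diag. apply gdiv_0_r. }
  rewrite (zsum_ext _ _ _ (fun i => INR (S p) * (c i * (phi i - phi (i + 1)%Z)))),
    <- zsum_mult_l, zsum_by_parts, Hleft, Hright in Hder by (intros; ring || lia).
  replace (- Z.of_nat (S p) + 1)%Z with (- Z.of_nat p)%Z in Hder by lia.
  assert (0 < INR (S p)) by (apply lt_0_INR; lia).
  rewrite <- (Rmult_0_r (/ INR (S p))), <- Hder. field_simplify; [|lra].
  apply zsum_ext. intros j Hj. unfold phi, gdiv.
  assert (t j < t (j + Z.of_nat (S p))%Z) by (apply knot_lt; lia).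
  destruct Req_EM_T; [lra|]. field. lra.
Qed.

Lemma bpiece_independent p (c : Z -> R) :
  (forall m x, (0 <= m <= G)%Z -> t m < x < t (m + 1)%Z ->
     zsum (- Z.of_nat p) G (fun i => c i * bpiece m p i x) = 0) ->
  forall i, (- Z.of_nat p <= i <= G)%Z -> c i = 0.
Proof.
  induction p as [|p IH] in c |- *; intros Hc i Hi.
  - assert (t i < t (i + 1)%Z) by (apply t_strict; lia).
    specialize (Hc i ((t i + t (i + 1)%Z) / 2) ltac:(lia) ltac:(lra)).
    rewrite <- Hc. symmetry. apply (zsum_kronecker 0 G c i). lia.
  - assert (Hdiff : forall j, (- Z.of_nat p <= j <= G)%Z ->
              (c j - c (j - 1)%Z) / (t (j + Z.of_nat (S p))%Z - t j) = 0).
    { apply (IH (fun j => (c j - c (j - 1)%Z) / (t (j + Z.of_nat (S p))%Z - t j))).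
      intros m x Hm Hx. apply bpiece_combination_derivative; try assumption.
      intros y Hy. now apply Hc. }
    assert (Hconst : forall j, (- Z.of_nat (S p) <= j <= G)%Z -> c j = c (- Z.of_nat (S p))%Z).
    { apply const_of_eq_pred. intros j Hj.
      assert (t j < t (j + Z.of_nat (S p))%Z) by (apply knot_lt; lia).
      assert (Hq := Hdiff j ltac:(lia)).
      apply Rminus_diag_uniq. unfold Rdiv in Hq.
      apply Rmult_integral in Hq as [Hq|Hq]; [assumption|].
      apply Rinv_neq_0_compat in Hq; lra. }
    assert (t 0%Z < t (0 + 1)%Z) by (apply t_strict; lia).
    specialize (Hc 0%Z ((t 0%Z + t (0 + 1)%Z) / 2) ltac:(lia) ltac:(lra)).
    rewrite (zsum_ext _ _ _ (fun j => c (- Z.of_nat (S p))%Z * bpiece 0 (S p) j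
               ((t 0%Z + t (0 + 1)%Z) / 2))), <- zsum_mult_l, bpiece_sum in Hc
      by (intros; rewrite ?Hconst; lia || reflexivity).
    rewrite Hconst by lia. lra.
Qed.

End ClampedKnots.

Lemma bspline_ext_knots (t t' : Z -> R) e p i x :
  (forall j, (i <= j <= i + Z.of_nat p + 1)%Z -> t j = t' j) ->
  bspline t e p i x = bspline t' e p i x.
Proof.
  induction p as [|p IH] in i |- *; intro H.
  - simpl. now rewrite !H by lia.
  - rewrite !bspline_S, !H by lia.
    rewrite (IH i), (IH (i + 1)%Z) by (intros; apply H; lia). reflexivity.
Qed.

Section KnotSequence.

Variables (lam : Z -> R) (a b : R) (g k : nat).
Hypothesis Hlam : knot_seq lam a b g k.
Notation G := (Z.of_nat g).
Notation K := (Z.of_nat k).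

(* [knot_seq] constrains [lam] only on [-k .. g+k+1]; clamping the index
   extends it to a sequence on all of [Z] as required by [ClampedKnots],
   without changing the B-splines of degree [k]. *)
Definition clamped_knots (j : Z) : R := lam (Z.max (- K) (Z.min j (G + K + 1))).

Lemma clamped_knots_eq j : (- K <= j <= G + K + 1)%Z -> clamped_knots j = lam j.
Proof. intro. unfold clamped_knots. f_equal. lia. Qed.

Lemma clamped_knots_left j : (j <= 0)%Z -> clamped_knots j = a.
Proof. intro. destruct Hlam as [Hl _]. apply Hl. lia. Qed.

Lemma clamped_knots_right j : (G + 1 <= j)%Z -> clamped_knots j = b.
Proof. intro. destruct Hlam as [_ [Hr _]]. apply Hr. lia. Qed.

Lemma clamped_knots_strict j : (0 <= j <= G)%Z -> clamped_knots j < clamped_knots (j + 1)%Z.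
Proof. intro. rewrite !clamped_knots_eq by lia. destruct Hlam as [_ [_ Hs]]. apply Hs. lia. Qed.

Lemma clamped_knots_mono i j : (i <= j)%Z -> clamped_knots i <= clamped_knots j.
Proof.
  assert (Hstep : forall j, clamped_knots j <= clamped_knots (j + 1)%Z).
  { intro j0. destruct (Z_lt_le_dec j0 0).
    - rewrite !clamped_knots_left by lia. lra.
    - destruct (Z_le_gt_dec j0 G).
      + left. apply clamped_knots_strict. lia.
      + rewrite !clamped_knots_right by lia. lra. }
  induction j as [j Hj|j Hj IH] using (Z_ind_from (i + 1)); intro Hij.
  - replace j with i by lia. lra.
  - eapply Rle_trans; [apply IH; lia|]. replace j with (j - 1 + 1)%Z at 2 by lia. apply Hstep.
Qed.

Ltac clamped := first [exact clamped_knots_mono | exact clamped_knots_left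
                      | exact clamped_knots_right | exact clamped_knots_strict].

Lemma bspline_clamped p i x : (- K <= i)%Z -> (i + Z.of_nat p + 1 <= G + K + 1)%Z ->
  bspline lam b p i x = bspline clamped_knots b p i x.
Proof. intros. apply bspline_ext_knots. intros. symmetry. apply clamped_knots_eq. lia. Qed.

Lemma zbspline_clamped m x : (- K <= m <= G - 1)%Z ->
  zbspline lam b k m x = zbspline clamped_knots b k m x.
Proof. intro. unfold zbspline. rewrite !bspline_clamped, !clamped_knots_eq by lia. reflexivity. Qed.

Lemma is_RInt_zbspline_knot_seq m : (- K <= m <= G - 1)%Z ->
  is_RInt (fun x => zbspline lam b k m x) a b 0.
Proof.
  intro Hm. apply (is_RInt_ext (fun x => zbspline clamped_knots b k m x)).
  - intros. symmetry. now apply zbspline_clamped.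
  - eapply is_RInt_zbspline; try clamped. exact Hm.
Qed.

Lemma bspline_independent (d : Z -> R) :
  (forall x, a <= x <= b -> zsum (- K) G (fun i => d i * bspline clamped_knots b k i x) = 0) ->
  forall i, (- K <= i <= G)%Z -> d i = 0.
Proof.
  intro Hd. apply (bpiece_independent clamped_knots a b g); try clamped. intros m x Hm Hx.
  assert (a <= clamped_knots m)
    by (rewrite <- (clamped_knots_left 0) by lia; apply clamped_knots_mono; lia).
  assert (clamped_knots (m + 1)%Z <= b)
    by (rewrite <- (clamped_knots_right (G + 1)) by lia; apply clamped_knots_mono; lia).
  rewrite <- (Hd x) by lra. apply zsum_ext. intros. f_equal. symmetry.
  eapply bspline_eq_bpiece_interval; try clamped; [exact Hm|lra].
Qed.

Definition zb_span (f : R -> R) : Prop :=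
  exists (kap : R) (w : Z -> R), forall x, a <= x <= b ->
    f x = kap + zsum (- K) (G - 1) (fun m => w m * zbspline lam b k m x).

Lemma zb_span_ext f f' : zb_span f -> (forall x, a <= x <= b -> f x = f' x) -> zb_span f'.
Proof. intros [kap [w H]] E. exists kap, w. intros. rewrite <- E by assumption. auto. Qed.

Lemma zb_span_const c : zb_span (fun _ => c).
Proof.
  exists c, (fun _ => 0). intros.
  rewrite (zsum_ext _ _ _ (fun _ => 0)), zsum_zero by (intros; ring). ring.
Qed.

Lemma zb_span_plus f f' : zb_span f -> zb_span f' -> zb_span (fun x => f x + f' x).
Proof.
  intros [kap [w H]] [kap' [w' H']]. exists (kap + kap'), (fun m => w m + w' m).
  intros x Hx. rewrite H, H' by assumption.
  rewrite (zsum_ext _ _ (fun m => (w m + w' m) * zbspline lam b k m x)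
    (fun m => w m * zbspline lam b k m x + w' m * zbspline lam b k m x)), zsum_plus
    by (intros; ring). ring.
Qed.

Lemma zb_span_scal c f : zb_span f -> zb_span (fun x => c * f x).
Proof.
  intros [kap [w H]]. exists (c * kap), (fun m => c * w m). intros x Hx.
  rewrite H, Rmult_plus_distr_l, zsum_mult_l by assumption.
  f_equal. apply zsum_ext. intros. ring.
Qed.

Lemma zb_span_zsum (F : Z -> R -> R) m n :
  (forall i, (m <= i <= n)%Z -> zb_span (F i)) -> zb_span (fun x => zsum m n (fun i => F i x)).
Proof.
  intro HF. apply (zsum_closed (fun f _ => zb_span f) F (fun _ => 0)).
  - apply zb_span_const.
  - intros f f' _ _. apply zb_span_plus.
  - exact HF.
Qed.

Lemma zb_span_zbspline m : (- K <= m <= G - 1)%Z -> zb_span (fun x => zbspline lam b k m x).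
Proof.
  intro Hm. exists 0, (fun j => if Z.eq_dec j m then 1 else 0). intros x Hx.
  rewrite Rplus_0_l, <- (zsum_kronecker (- K) (G - 1) (fun j => zbspline lam b k j x) m Hm).
  apply zsum_ext. intros. ring.
Qed.

Definition knot_width (i : Z) : R := clamped_knots (i + K + 1)%Z - clamped_knots i.

(* The B-spline normalized to unit integral, so that [Z_i = M_i - M_(i+1)]. *)
Definition mspline (i : Z) (x : R) : R :=
  INR (k + 1) * (bspline clamped_knots b k i x / knot_width i).

Lemma knot_width_pos i : (- K <= i <= G)%Z -> 0 < knot_width i.
Proof.
  intro. unfold knot_width.
  assert (clamped_knots i < clamped_knots (i + K + 1)%Z) by (eapply knot_lt; try clamped; lia).
  lra.
Qed.

Lemma zbspline_eq_mspline_sub m x : (- K <= m <= G - 1)%Z ->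
  zbspline lam b k m x = mspline m x - mspline (m + 1)%Z x.
Proof.
  intro. rewrite zbspline_clamped by assumption. unfold zbspline, mspline, knot_width.
  replace (m + 1 + K + 1)%Z with (m + K + 2)%Z by lia. ring.
Qed.

Lemma bspline_eq_mspline i x : (- K <= i <= G)%Z ->
  bspline clamped_knots b k i x = knot_width i / INR (k + 1) * mspline i x.
Proof.
  intro. unfold mspline. assert (0 < knot_width i) by now apply knot_width_pos.
  assert (0 < INR (k + 1)) by (apply lt_0_INR; lia). field. lra.
Qed.

Lemma mspline_weights_pos : 0 < zsum (- K) G (fun i => knot_width i / INR (k + 1)).
Proof.
  apply zsum_pos; [lia|]. intros i Hi. assert (0 < knot_width i) by now apply knot_width_pos.
  assert (0 < INR (k + 1)) by (apply lt_0_INR; lia). apply Rdiv_lt_0_compat; lra.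
Qed.

Lemma mspline_sub_in_zb_span i : (- K <= i <= G)%Z ->
  zb_span (fun x => mspline i x - mspline G x).
Proof.
  intro Hi. replace i with (G - Z.of_nat (Z.to_nat (G - i)))%Z by lia.
  assert (Hn : (Z.of_nat (Z.to_nat (G - i)) <= G + K)%Z) by lia. revert Hn.
  induction (Z.to_nat (G - i)) as [|n IH]; intro Hn.
  - apply (zb_span_ext (fun _ => 0)); [apply zb_span_const|].
    intros. replace (G - Z.of_nat 0)%Z with G by lia. ring.
  - apply (zb_span_ext (fun x => zbspline lam b k (G - Z.of_nat (S n))%Z x
                                 + (mspline (G - Z.of_nat n)%Z x - mspline G x))).
    + apply zb_span_plus; [apply zb_span_zbspline; lia|apply IH; lia].
    + intros x Hx. rewrite zbspline_eq_mspline_sub by lia.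
      replace (G - Z.of_nat (S n) + 1)%Z with (G - Z.of_nat n)%Z by lia. ring.
Qed.

(* From the partition of unity [1 = sum_i c_i M_i] with weights [c_i > 0]:
   [M_G = (1 - sum_i c_i (M_i - M_G)) / sum_i c_i]. *)
Lemma mspline_last_in_zb_span : zb_span (fun x => mspline G x).
Proof.
  set (c := fun i => knot_width i / INR (k + 1)).
  assert (Hc : 0 < zsum (- K) G c) by apply mspline_weights_pos.
  apply (zb_span_ext (fun x => / zsum (- K) G c *
           (1 + -1 * zsum (- K) G (fun i => c i * (mspline i x - mspline G x))))).
  - apply zb_span_scal, zb_span_plus; [apply zb_span_const|].
    apply zb_span_scal, zb_span_zsum. intros i Hi.
    apply zb_span_scal, mspline_sub_in_zb_span, Hi.
  - intros x Hx.
    assert (Hunity : zsum (- K) G (fun i => c i * mspline i x) = 1).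
    { rewrite <- (bspline_sum clamped_knots a b g) with (p := k) (x := x) by (try clamped; exact Hx).
      apply zsum_ext. intros. symmetry. now apply bspline_eq_mspline. }
    assert (Hsplit : zsum (- K) G (fun i => c i * (mspline i x - mspline G x))
                     = zsum (- K) G (fun i => c i * mspline i x) + -1 * (mspline G x * zsum (- K) G c)).
    { rewrite !zsum_mult_l, <- zsum_plus. apply zsum_ext. intros. ring. }
    rewrite Hsplit, Hunity. field. lra.
Qed.

Lemma bspline_in_zb_span i : (- K <= i <= G)%Z -> zb_span (fun x => bspline lam b k i x).
Proof.
  intro Hi.
  apply (zb_span_ext (fun x => knot_width i / INR (k + 1)
                                * ((mspline i x - mspline G x) + mspline G x))).
  - apply zb_span_scal, zb_span_plus; [now apply mspline_sub_in_zb_span|].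
    apply mspline_last_in_zb_span.
  - intros x Hx. rewrite bspline_clamped, bspline_eq_mspline by lia. ring.
Qed.

Lemma zbspline_sum_by_parts (w : Z -> R) x : w (- K - 1)%Z = 0 -> w G = 0 ->
  zsum (- K) (G - 1) (fun m => w m * zbspline lam b k m x)
  = zsum (- K) G (fun i => (w i - w (i - 1)%Z) * mspline i x).
Proof.
  intros Hl Hr.
  transitivity (zsum (- K) G (fun m => w m * (mspline m x - mspline (m + 1)%Z x))).
  - rewrite (zsum_last (- K) G), Hr, Rmult_0_l, Rplus_0_r by lia.
    apply zsum_ext. intros. now rewrite zbspline_eq_mspline_sub by lia.
  - rewrite zsum_by_parts, Hr, (zsum_first (- K) G), Hl by lia. ring.
Qed.

Lemma zb_span_unique (kap : R) (w : Z -> R) :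
  (forall x, a <= x <= b -> kap + zsum (- K) (G - 1) (fun m => w m * zbspline lam b k m x) = 0) ->
  kap = 0 /\ forall m, (- K <= m <= G - 1)%Z -> w m = 0.
Proof.
  intro H.
  set (w0 := fun m => if andb (- K <=? m)%Z (m <=? G - 1)%Z then w m else 0).
  assert (Hw0l : w0 (- K - 1)%Z = 0) by (unfold w0; destruct andb eqn:E; lia || reflexivity).
  assert (Hw0r : w0 G = 0) by (unfold w0; destruct andb eqn:E; lia || reflexivity).
  assert (Hw0 : forall m, (- K <= m <= G - 1)%Z -> w0 m = w m).
  { intros m Hm. unfold w0. destruct andb eqn:E; lia || reflexivity. }
  set (c := fun i => knot_width i / INR (k + 1)).
  assert (Hc : forall i, (- K <= i <= G)%Z -> 0 < c i).
  { intros i Hi. assert (0 < knot_width i) by now apply knot_width_pos.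
    assert (0 < INR (k + 1)) by (apply lt_0_INR; lia). unfold c. apply Rdiv_lt_0_compat; lra. }
  assert (Hcoef : forall i, (- K <= i <= G)%Z -> (kap * c i + (w0 i - w0 (i - 1)%Z)) / c i = 0).
  { apply bspline_independent. intros x Hx. rewrite <- (H x Hx).
    rewrite (zsum_ext _ _ (fun m => w m * zbspline lam b k m x)
               (fun m => w0 m * zbspline lam b k m x)) by (intros; now rewrite Hw0).
    rewrite zbspline_sum_by_parts by assumption.
    rewrite <- (Rmult_1_r kap) at 1.
    rewrite <- (bspline_sum clamped_knots a b g) with (p := k) (x := x) by (try clamped; exact Hx).
    rewrite zsum_mult_l, <- zsum_plus. apply zsum_ext. intros i Hi.
    rewrite bspline_eq_mspline by assumption. fold (c i).
    specialize (Hc i Hi). field. lra. }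
  assert (Hdiff : forall i, (- K <= i <= G)%Z -> w0 i - w0 (i - 1)%Z = - kap * c i).
  { intros i Hi. specialize (Hcoef i Hi). specialize (Hc i Hi).
    apply Rmult_eq_compat_r with (r := c i) in Hcoef. field_simplify in Hcoef; lra. }
  assert (Hkap : kap = 0).
  { assert (Htel := zsum_telescope (- K) G w0 ltac:(lia)).
    rewrite (zsum_ext _ _ _ (fun i => - kap * c i)), <- zsum_mult_l, Hw0l, Hw0r in Htel
      by exact Hdiff.
    assert (Hsum := mspline_weights_pos). fold c in Hsum. nra. }
  split; [exact Hkap|]. intros m Hm. rewrite <- Hw0 by assumption.
  rewrite (const_of_eq_pred w0 (- K - 1) G); [exact Hw0l| |lia].
  intros i Hi. apply Rminus_diag_uniq. rewrite Hdiff, Hkap by lia. ring.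
Qed.

End KnotSequence.

Lemma is_RInt_zsum (F : Z -> R -> R) (w : Z -> R) m n (al be : R) :
  (forall i, (m <= i <= n)%Z -> is_RInt (F i) al be (w i)) ->
  is_RInt (fun y => zsum m n (fun i => F i y)) al be (zsum m n w).
Proof.
  apply (zsum_closed (fun f r => is_RInt f al be r)).
  - eapply is_RInt_eq; [apply is_RInt_const|]. change (scal (be - al) 0) with ((be - al) * 0). ring.
  - intros f f' r r' Hf Hf'. exact (is_RInt_plus f f' al be r r' Hf Hf').
Qed.

Lemma is_RInt_zbspline_combination lam a b g k (w : Z -> R) :
  knot_seq lam a b g k ->
  is_RInt (fun x => zsum (- Z.of_nat k) (Z.of_nat g - 1) (fun m => w m * zbspline lam b k m x))
    a b 0.
Proof.
  intro Hlam. rewrite <- (zsum_zero (- Z.of_nat k) (Z.of_nat g - 1)).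
  apply is_RInt_zsum. intros m Hm.
  pose proof (is_RInt_scal _ a b (w m) 0 (is_RInt_zbspline_knot_seq lam a b g k Hlam m Hm)) as Hw.
  eapply is_RInt_eq; [exact Hw|]. change (scal (w m) 0) with (w m * 0). ring.
Qed.

Section TensorProduct.

Variables (lam mu : Z -> R) (a b c d : R) (g h k l : nat).
Hypothesis Hlam : knot_seq lam a b g k.
Hypothesis Hmu : knot_seq mu c d h l.
Notation G := (Z.of_nat g).
Notation K := (Z.of_nat k).
Notation L := (Z.of_nat l).
Notation zb := (zb_expansion lam mu b d g h k l).
Notation Zx := (zbspline lam b k).
Notation Zy := (zbspline mu d l).

Definition zb_span2 (f : R -> R -> R) : Prop :=
  exists kap (z : Z -> Z -> R) (v u : Z -> R),
    forall x y, a <= x <= b -> c <= y <= d -> f x y = kap + zb z v u x y.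

Lemma zb_expansion_lin (z z' : Z -> Z -> R) (v v' u u' : Z -> R) (al be x y : R) :
  al * zb z v u x y + be * zb z' v' u' x y =
  zb (fun i j => al * z i j + be * z' i j) (fun i => al * v i + be * v' i)
     (fun j => al * u j + be * u' j) x y.
Proof.
  unfold zb_expansion.
  transitivity
    (zsum (- K) (G - 1) (fun i =>
        al * zsum (- L) (Z.of_nat h - 1) (fun j => z i j * (Zx i x * Zy j y))
      + be * zsum (- L) (Z.of_nat h - 1) (fun j => z' i j * (Zx i x * Zy j y)))
     + zsum (- K) (G - 1) (fun i => al * (v i * Zx i x) + be * (v' i * Zx i x))
     + zsum (- L) (Z.of_nat h - 1) (fun j => al * (u j * Zy j y) + be * (u' j * Zy j y))).
  - rewrite !zsum_plus, <- !zsum_mult_l. ring.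
  - f_equal; [f_equal|]; apply zsum_ext; intros; [|ring|ring].
    rewrite !zsum_mult_l, <- zsum_plus. apply zsum_ext. intros. ring.
Qed.

Lemma zb_expansion_zero x y : zb (fun _ _ => 0) (fun _ => 0) (fun _ => 0) x y = 0.
Proof.
  unfold zb_expansion.
  rewrite (zsum_ext _ _ (fun i => zsum (- L) (Z.of_nat h - 1) (fun j => 0 * (Zx i x * Zy j y)))
             (fun _ => 0)) by (intros; rewrite <- zsum_mult_l; ring).
  rewrite (zsum_ext _ _ (fun i => 0 * Zx i x) (fun _ => 0)) by (intros; ring).
  rewrite (zsum_ext _ _ (fun j => 0 * Zy j y) (fun _ => 0)) by (intros; ring).
  rewrite !zsum_zero. ring.
Qed.

Lemma zb_span2_ext f f' :
  zb_span2 f -> (forall x y, a <= x <= b -> c <= y <= d -> f x y = f' x y) -> zb_span2 f'.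
Proof.
  intros [kap [z [v [u Hf]]]] E. exists kap, z, v, u. intros. rewrite <- E by assumption. auto.
Qed.

Lemma zb_span2_const r : zb_span2 (fun _ _ => r).
Proof.
  exists r, (fun _ _ => 0), (fun _ => 0), (fun _ => 0). intros. rewrite zb_expansion_zero. ring.
Qed.

Lemma zb_span2_plus f f' : zb_span2 f -> zb_span2 f' -> zb_span2 (fun x y => f x y + f' x y).
Proof.
  intros [kap [z [v [u Hf]]]] [kap' [z' [v' [u' Hf']]]].
  exists (kap + kap'), (fun i j => 1 * z i j + 1 * z' i j), (fun i => 1 * v i + 1 * v' i),
    (fun j => 1 * u j + 1 * u' j).
  intros x y Hx Hy. rewrite Hf, Hf', <- zb_expansion_lin by assumption. ring.
Qed.

Lemma zb_span2_zsum (F : Z -> R -> R -> R) m n :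
  (forall i, (m <= i <= n)%Z -> zb_span2 (F i)) ->
  zb_span2 (fun x y => zsum m n (fun i => F i x y)).
Proof.
  apply (zsum_closed (fun f _ => zb_span2 (fun x y => f (x, y)))
           (fun i p => F i (fst p) (snd p)) (fun _ => 0)).
  - apply zb_span2_const.
  - intros f f' _ _. apply zb_span2_plus.
Qed.

Lemma zb_span2_mult (f1 f2 : R -> R) :
  zb_span lam a b g k f1 -> zb_span mu c d h l f2 -> zb_span2 (fun x y => f1 x * f2 y).
Proof.
  intros [kap1 [w1 H1]] [kap2 [w2 H2]].
  exists (kap1 * kap2), (fun i j => w1 i * w2 j), (fun i => kap2 * w1 i), (fun j => kap1 * w2 j).
  intros x y Hx Hy. rewrite H1, H2 by assumption. unfold zb_expansion.
  set (A := zsum (- K) (G - 1) (fun i => w1 i * Zx i x)).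
  set (B := zsum (- L) (Z.of_nat h - 1) (fun j => w2 j * Zy j y)).
  assert (HAB : A * B = zsum (- K) (G - 1) (fun i =>
                  zsum (- L) (Z.of_nat h - 1) (fun j => w1 i * w2 j * (Zx i x * Zy j y)))).
  { unfold A. rewrite (Rmult_comm _ B), zsum_mult_l. apply zsum_ext. intros i Hi.
    unfold B. rewrite Rmult_comm, zsum_mult_l. apply zsum_ext. intros. ring. }
  rewrite <- HAB.
  replace (zsum (- K) (G - 1) (fun i => kap2 * w1 i * Zx i x)) with (kap2 * A)
    by (unfold A; rewrite zsum_mult_l; apply zsum_ext; intros; ring).
  replace (zsum (- L) (Z.of_nat h - 1) (fun j => kap1 * w2 j * Zy j y)) with (kap1 * B)
    by (unfold B; rewrite zsum_mult_l; apply zsum_ext; intros; ring).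
  ring.
Qed.

Lemma spline_in_zb_span2 s : in_spline_space lam mu a b c d g h k l s -> zb_span2 s.
Proof.
  intros [coef Hs]. eapply zb_span2_ext; [|intros; symmetry; apply Hs; assumption].
  apply zb_span2_zsum. intros i Hi. apply zb_span2_zsum. intros j Hj.
  apply (zb_span2_mult (fun x => coef i j * bspline lam b k i x) (fun y => bspline mu d l j y)).
  - apply zb_span_scal, bspline_in_zb_span; [assumption|lia].
  - apply bspline_in_zb_span; [assumption|lia].
Qed.

Lemma is_RInt_zb_expansion_y z v u x :
  is_RInt (fun y => zb z v u x y) c d ((d - c) * zsum (- K) (G - 1) (fun i => v i * Zx i x)).
Proof.
  unfold zb_expansion.
  eapply is_RInt_eq.
  - apply (is_RInt_plus (V := R_NormedModule)); [apply (is_RInt_plus (V := R_NormedModule))|].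
    + apply (is_RInt_zsum _ (fun _ => 0)). intros i Hi.
      apply (is_RInt_ext (fun y => zsum (- L) (Z.of_nat h - 1) (fun j => z i j * Zx i x * Zy j y))).
      { intros. apply zsum_ext. intros. ring. }
      now apply is_RInt_zbspline_combination.
    + apply is_RInt_const.
    + now apply is_RInt_zbspline_combination.
  - rewrite zsum_zero. unfold plus, scal; simpl. unfold mult; simpl. ring.
Qed.

Section Integral.

Hypothesis Hab : a < b.
Hypothesis Hcd : c < d.

Lemma dint_zb_expansion s kap z v u :
  (forall x y, a <= x <= b -> c <= y <= d -> s x y = kap + zb z v u x y) ->
  dint a b c d s = kap * (b - a) * (d - c).
Proof.
  intro Hrep. unfold dint.
  rewrite (RInt_ext _ (fun x => (d - c) * kap + (d - c) * zsum (- K) (G - 1) (fun i => v i * Zx i x))).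
  - apply is_RInt_unique. eapply is_RInt_eq.
    + apply (is_RInt_plus (V := R_NormedModule)); [apply is_RInt_const|].
      apply (is_RInt_scal (V := R_NormedModule)). now apply is_RInt_zbspline_combination.
    + change ((b - a) * ((d - c) * kap) + (d - c) * 0 = kap * (b - a) * (d - c)). ring.
  - intros x Hx. rewrite Rmin_left, Rmax_right in Hx by lra.
    rewrite (RInt_ext _ (fun y => kap + zb z v u x y)).
    + apply is_RInt_unique. eapply is_RInt_eq.
      * apply (is_RInt_plus (V := R_NormedModule));
          [apply is_RInt_const|apply is_RInt_zb_expansion_y].
      * reflexivity.
    + intros y Hy. rewrite Rmin_left, Rmax_right in Hy by lra. apply Hrep; lra.
Qed.

End Integral.

Lemma zb_expansion_regroup z v u x y :
  zb z v u x y = zsum (- L) (Z.of_nat h - 1) (fun j => u j * Zy j y)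
    + zsum (- K) (G - 1) (fun i =>
        (v i + zsum (- L) (Z.of_nat h - 1) (fun j => z i j * Zy j y)) * Zx i x).
Proof.
  unfold zb_expansion.
  rewrite (zsum_ext _ _ (fun i => (v i + zsum (- L) (Z.of_nat h - 1) (fun j => z i j * Zy j y)) * Zx i x)
    (fun i => v i * Zx i x + zsum (- L) (Z.of_nat h - 1) (fun j => z i j * (Zx i x * Zy j y)))).
  - rewrite zsum_plus. ring.
  - intros i Hi. rewrite Rmult_plus_distr_r, (Rmult_comm (zsum _ _ _)), zsum_mult_l. f_equal.
    apply zsum_ext. intros. ring.
Qed.

Lemma zb_expansion_unique z v u :
  (forall x y, a <= x <= b -> c <= y <= d -> zb z v u x y = 0) ->
  (forall i j, (- K <= i <= G - 1)%Z -> (- L <= j <= Z.of_nat h - 1)%Z -> z i j = 0) /\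
  (forall i, (- K <= i <= G - 1)%Z -> v i = 0) /\
  (forall j, (- L <= j <= Z.of_nat h - 1)%Z -> u j = 0).
Proof.
  intro Hzero.
  assert (Hx : forall y, c <= y <= d ->
    zsum (- L) (Z.of_nat h - 1) (fun j => u j * Zy j y) = 0 /\
    forall i, (- K <= i <= G - 1)%Z ->
      v i + zsum (- L) (Z.of_nat h - 1) (fun j => z i j * Zy j y) = 0).
  { intros y Hy. apply (zb_span_unique lam a b g k Hlam). intros x Hx.
    rewrite <- zb_expansion_regroup. now apply Hzero. }
  assert (Hv : forall i, (- K <= i <= G - 1)%Z ->
    v i = 0 /\ forall j, (- L <= j <= Z.of_nat h - 1)%Z -> z i j = 0).
  { intros i Hi. apply (zb_span_unique mu c d h l Hmu). intros y Hy. now apply Hx. }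
  split; [|split].
  - intros i j Hi Hj. now apply Hv.
  - intros i Hi. now apply Hv.
  - apply (zb_span_unique mu c d h l Hmu 0). intros y Hy. rewrite Rplus_0_l. now apply Hx.
Qed.

End TensorProduct.

Theorem corollary2 (a b c d : R) (g h k l : nat) (lam mu : Z -> R)
  (Hab : a < b) (Hcd : c < d)
  (Hlam : knot_seq lam a b g k) (Hmu : knot_seq mu c d h l)
  (s : R -> R -> R)
  (Hs : in_zero_spline_space lam mu a b c d g h k l s) :
  (exists (z : Z -> Z -> R) (v u : Z -> R),
     forall x y, a <= x <= b -> c <= y <= d ->
       s x y = zb_expansion lam mu b d g h k l z v u x y) /\
  (forall (z z' : Z -> Z -> R) (v v' u u' : Z -> R),
     (forall x y, a <= x <= b -> c <= y <= d ->
        s x y = zb_expansion lam mu b d g h k l z v u x y) ->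
     (forall x y, a <= x <= b -> c <= y <= d ->
        s x y = zb_expansion lam mu b d g h k l z' v' u' x y) ->
     (forall i j, (- Z.of_nat k <= i <= Z.of_nat g - 1)%Z ->
                  (- Z.of_nat l <= j <= Z.of_nat h - 1)%Z -> z i j = z' i j) /\
     (forall i, (- Z.of_nat k <= i <= Z.of_nat g - 1)%Z -> v i = v' i) /\
     (forall j, (- Z.of_nat l <= j <= Z.of_nat h - 1)%Z -> u j = u' j)).
Proof.
  destruct Hs as [Hspline Hint].
  destruct (spline_in_zb_span2 lam mu a b c d g h k l Hlam Hmu s Hspline)
    as [kap [z [v [u Hrep]]]].
  assert (Hkap : kap = 0).
  { rewrite (dint_zb_expansion lam mu a b c d g h k l Hlam Hmu Hab Hcd s kap z v u Hrep) in Hint.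
    assert (0 < (b - a) * (d - c)) by (apply Rmult_lt_0_compat; lra). nra. }
  split.
  - exists z, v, u. intros. rewrite Hrep, Hkap by assumption. ring.
  - intros z1 z2 v1 v2 u1 u2 H1 H2.
    destruct (zb_expansion_unique lam mu a b c d g h k l Hlam Hmu
      (fun i j => 1 * z1 i j + -1 * z2 i j) (fun i => 1 * v1 i + -1 * v2 i)
      (fun j => 1 * u1 j + -1 * u2 j)) as [Hz [Hv Hu]].
    { intros x y Hx Hy. rewrite <- zb_expansion_lin, <- H1, <- H2 by assumption. ring. }
    split; [|split].
    + intros i j Hi Hj. specialize (Hz i j Hi Hj). lra.
    + intros i Hi. specialize (Hv i Hi). lra.
    + intros j Hj. specialize (Hu j Hj). lra.
Qed.
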